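(* Let $\alpha>1$ be an irrational number of finite type $\tau$ and $\beta\in\mathbb{R}$. For every sufficiently small $\epsilon>0$ there is a constant $C=C(\alpha,\beta,\epsilon)$ such that for every integer $d\ge1$ and every $N\ge1$, \[ \left|\#\{n\le N:\ d\mid n,\ n\in\mathcal{B}_{\alpha,\beta}\}-\frac{N}{\alpha d}\right|\le C\,N^{\frac{\tau}{1+\tau}+\epsilon}. \]
   Context: The type of an irrational $\alpha$ is $\tau(\alpha)=\sup\{t\in\mathbb{R}:\liminf_{n\to\infty} n^t\|\alpha n\|=0\}$, where $\|\cdot\|$ is the distance to the nearest integer; finite type means $\tau<\infty$ (one always has $\tau\ge1$). The Beatty sequence is $\mathcal{B}_{\alpha,\beta}=([\alpha n+\beta])_{n=1}^\infty$, with $[\cdot]$ the integer part. *)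

From Stdlib Require Import Reals Lra Lia ZArith List Classical ClassicalEpsilon.
Open Scope R_scope.

(* floor x = the integer part [x] (Int_part x = up x - 1 is the floor). *)
Definition floorR (x : R) : Z := Int_part x.

Definition dist_Z (x : R) : R :=
  Rmin (x - IZR (floorR x)) (IZR (floorR x) + 1 - x).

(* liminf_{n -> oo} n^t ||alpha n|| = 0, for the nonnegative sequence
   n^t ||alpha n||: equivalently, the sequence gets arbitrarily close to 0
   infinitely often. *)
Definition liminf_zero (t alpha : R) : Prop :=
  forall eps : R, eps > 0 -> forall M : nat, exists n : nat,
    (n >= M)%nat /\ (n >= 1)%nat /\
    Rpower (INR n) t * dist_Z (alpha * INR n) < eps.

Definition type_set (alpha : R) (t : R) : Prop := liminf_zero t alpha.

(* alpha has finite type tau: tau = sup {t | liminf n^t ||alpha n|| = 0} < oo. *)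
Definition has_type (alpha tau : R) : Prop := is_lub (type_set alpha) tau.

Definition irrational (x : R) : Prop := forall p q : Z, q <> 0%Z -> x <> IZR p / IZR q.

Definition in_beatty (alpha beta : R) (n : Z) : Prop :=
  exists m : nat, (m >= 1)%nat /\ floorR (alpha * INR m + beta) = n.

Definition decP (P : Prop) : bool :=
  if excluded_middle_informative P then true else false.

Definition beatty_div_count (alpha beta : R) (d N : nat) : nat :=
  length (filter (fun n : nat =>
     decP (Nat.divide d n /\ in_beatty alpha beta (Z.of_nat n)))
   (seq 1 N)).

(* A multiple [d k] is a term [floor (alpha m + beta)] iff the window of length [1/alpha]
   ending at [(beta - d k)/alpha] contains an integer (namely [-m]); apart from the
   multiples with [k <= beta], where [m >= 1] may fail, the count is therefore a sum of
   window counts along the progression [beta/alpha + k theta], [theta = -d/alpha].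
   Take a Dirichlet approximation [|q theta - p| <= 1/Q] with [q <= Q]: by Hermite's
   identity each block of [q] consecutive windows contains [q/alpha] integers up to 3,
   so the error is [O(K/q + Q)] with [K = N/d].  Finite type gives
   [c Q <= (q d)^t] for every [t > tau], and [Q ~ N^(t/(1+t))] balances both terms. *)

From Stdlib Require Import Reals Lra Lia ZArith List Permutation Classical ClassicalEpsilon.
Open Scope R_scope.

Lemma floorR_spec x : IZR (floorR x) <= x < IZR (floorR x) + 1.
Proof. unfold floorR. destruct (base_Int_part x). lra. Qed.

Lemma floorR_unique x z : IZR z <= x < IZR z + 1 -> floorR x = z.
Proof. intros H. unfold floorR. symmetry. apply Int_part_spec. lra. Qed.

Lemma floorR_ge z x : IZR z <= x -> (z <= floorR x)%Z.
Proof.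
  intros H. destruct (floorR_spec x) as [H1 H2].
  destruct (Z_le_gt_dec z (floorR x)) as [h|h]; auto.
  assert (IZR (floorR x) + 1 <= IZR z) by (rewrite <- plus_IZR; apply IZR_le; lia).
  lra.
Qed.

Lemma floorR_lt z x : x < IZR z -> (floorR x < z)%Z.
Proof.
  intros H. destruct (floorR_spec x) as [H1 H2].
  destruct (Z_lt_le_dec (floorR x) z) as [h|h]; auto.
  apply IZR_le in h. lra.
Qed.

Lemma floorR_mono x y : x <= y -> (floorR x <= floorR y)%Z.
Proof. intros H. apply floorR_ge. destruct (floorR_spec x). lra. Qed.

Lemma floorR_add_IZR x n : floorR (x + IZR n) = (floorR x + n)%Z.
Proof. apply floorR_unique. rewrite plus_IZR. destruct (floorR_spec x). lra. Qed.

Lemma Rabs_le_between x a : Rabs x <= a -> - a <= x <= a.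
Proof. unfold Rabs. destruct (Rcase_abs x); lra. Qed.

Lemma Rpower_pos x y : 0 < Rpower x y.
Proof. unfold Rpower; apply exp_pos. Qed.

Lemma Rpower_ge_1 x t : 1 <= x -> 0 <= t -> 1 <= Rpower x t.
Proof. intros Hx Ht. rewrite <- (Rpower_O x) by lra. apply Rle_Rpower; lra. Qed.

Lemma inv_pos_lt_1 a : a > 1 -> 0 < 1 / a < 1.
Proof.
  intros Ha. split.
  - unfold Rdiv; rewrite Rmult_1_l; apply Rinv_0_lt_compat; lra.
  - apply (Rmult_lt_reg_l a); [lra|]. replace (a * (1 / a)) with 1 by (field; lra). lra.
Qed.

Fixpoint sumR (f : nat -> R) (n : nat) : R :=
  match n with O => 0 | S n => sumR f n + f n end.

Lemma sumR_ext f g n : (forall j, (j < n)%nat -> f j = g j) -> sumR f n = sumR g n.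
Proof.
  induction n; simpl; intros H; auto.
  rewrite IHn by (intros; apply H; lia). rewrite H by lia. auto.
Qed.

Lemma sumR_le f g n : (forall j, (j < n)%nat -> f j <= g j) -> sumR f n <= sumR g n.
Proof.
  induction n; simpl; intros H; [lra|].
  assert (sumR f n <= sumR g n) by (apply IHn; intros; apply H; lia).
  assert (f n <= g n) by (apply H; lia). lra.
Qed.

Lemma sumR_plus f g n : sumR (fun j => f j + g j) n = sumR f n + sumR g n.
Proof. induction n; simpl; lra. Qed.

Lemma sumR_minus f g n : sumR (fun j => f j - g j) n = sumR f n - sumR g n.
Proof. induction n; simpl; lra. Qed.

Lemma sumR_const a n : sumR (fun _ => a) n = INR n * a.
Proof. induction n; simpl sumR; [simpl; lra|]. rewrite S_INR. lra. Qed.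

Lemma sumR_split f a b : sumR f (a + b) = sumR f a + sumR (fun j => f (a + j)%nat) b.
Proof.
  induction b; simpl.
  - rewrite Nat.add_0_r. lra.
  - rewrite Nat.add_succ_r. simpl. rewrite IHb. lra.
Qed.

Lemma sumR_bounds f n : (forall j, (j < n)%nat -> 0 <= f j <= 1) -> 0 <= sumR f n <= INR n.
Proof.
  intros H. split.
  - rewrite <- (Rmult_0_r (INR n)), <- sumR_const. apply sumR_le. intros; apply H; auto.
  - rewrite <- (Rmult_1_r (INR n)), <- sumR_const. apply sumR_le. intros; apply H; auto.
Qed.

Lemma sumR_fold_right h n : sumR h n = fold_right (fun a s => h a + s) 0 (seq 0 n).
Proof.
  induction n; [reflexivity|]. cbn [sumR]. rewrite seq_S, fold_right_app, IHn.
  simpl. generalize (seq 0 n) as l. induction l as [|a l IH]; simpl; lra.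
Qed.

Lemma sumR_permute h (r : nat -> nat) n :
  (forall i j, (i < n)%nat -> (j < n)%nat -> r i = r j -> i = j) ->
  (forall j, (j < n)%nat -> (r j < n)%nat) ->
  sumR (fun j => h (r j)) n = sumR h n.
Proof.
  intros Hinj Hr. rewrite !sumR_fold_right.
  assert (Hmap : forall l, fold_right (fun a s => h (r a) + s) 0 l
                         = fold_right (fun a s => h a + s) 0 (map r l))
    by (induction l; simpl; congruence).
  rewrite Hmap.
  assert (Hp : Permutation (map r (seq 0 n)) (seq 0 n)).
  { apply NoDup_Permutation_bis.
    - apply FinFun.Injective_map_NoDup_in; [|apply seq_NoDup].
      intros x y Hx Hy. apply in_seq in Hx, Hy. apply Hinj; lia.
    - rewrite length_map; auto.
    - intros y Hy. apply in_map_iff in Hy. destruct Hy as [x [<- Hx]].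
      apply in_seq in Hx. apply in_seq. specialize (Hr x ltac:(lia)). lia. }
  assert (Hperm : forall l l', Permutation l l' ->
    fold_right (fun a s => h a + s) 0 l = fold_right (fun a s => h a + s) 0 l')
    by (induction 1; simpl; lra).
  exact (Hperm _ _ Hp).
Qed.

Lemma sumR_indicator_tail q b : (b <= q)%nat ->
  sumR (fun r => if Nat.ltb (r + b) q then 0 else 1) q = INR b.
Proof.
  intros Hb. replace q with ((q - b) + b)%nat at 1 by lia.
  rewrite sumR_split.
  rewrite (sumR_ext _ (fun _ => 0) (q - b)).
  2:{ intros j Hj. destruct (Nat.ltb_spec (j + b) q); auto; lia. }
  rewrite (sumR_ext _ (fun _ => 1) b).
  2:{ intros j Hj. cbv beta. destruct (Nat.ltb_spec (q - b + j + b) q); auto; lia. }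
  rewrite !sumR_const. lra.
Qed.

(* Writing [floorR (q x) = q a + b] with [0 <= b < q], the [r]-th term is [a] or [a + 1]
   according as [r + b < q] or not. *)
Lemma hermite_identity q x : (1 <= q)%nat ->
  sumR (fun r => IZR (floorR (x + INR r / INR q))) q = IZR (floorR (INR q * x)).
Proof.
  intros Hq.
  set (n := floorR (INR q * x)).
  set (qz := Z.of_nat q).
  assert (Hqz : (0 < qz)%Z) by (unfold qz; lia).
  set (a := (n / qz)%Z). set (b := (n mod qz)%Z).
  assert (Hn : n = (qz * a + b)%Z) by apply Z_div_mod_eq_full.
  assert (Hb : (0 <= b < qz)%Z) by (apply Z.mod_pos_bound; auto).
  set (bn := Z.to_nat b).
  assert (Hbn : IZR b = INR bn) by (unfold bn; rewrite INR_IZR_INZ, Z2Nat.id by lia; reflexivity).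
  assert (Hbq : (bn < q)%nat) by (unfold bn; unfold qz in Hb; lia).
  assert (HQ : INR q = IZR qz) by (unfold qz; apply INR_IZR_INZ).
  assert (HQp : 0 < INR q) by (apply lt_0_INR; lia).
  destruct (floorR_spec (INR q * x)) as [F1 F2]. fold n in F1, F2.
  rewrite Hn, plus_IZR, mult_IZR, <- HQ, Hbn in F1, F2.
  rewrite (sumR_ext _ (fun r => IZR a + (if Nat.ltb (r + bn) q then 0 else 1))).
  2:{ intros r Hr.
      assert (Hy : INR q * (x + INR r / INR q) = INR q * x + INR r) by (field; lra).
      assert (0 <= INR r) by apply pos_INR. assert (0 <= INR bn) by apply pos_INR.
      destruct (Nat.ltb_spec (r + bn) q) as [h|h].
      - assert (h' : INR r + INR bn + 1 <= INR q)
          by (rewrite <- plus_INR, <- S_INR; apply le_INR; lia).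
        rewrite Rplus_0_r. f_equal. apply floorR_unique. split.
        + apply (Rmult_le_reg_l (INR q)); auto. rewrite Hy. lra.
        + apply (Rmult_lt_reg_l (INR q)); auto. rewrite Hy. lra.
      - assert (h' : INR q <= INR r + INR bn) by (rewrite <- plus_INR; apply le_INR; lia).
        assert (h'' : INR r + INR bn + 1 <= 2 * INR q).
        { replace 2 with (INR 2) by (simpl; lra).
          rewrite <- mult_INR, <- plus_INR, <- S_INR. apply le_INR. lia. }
        rewrite <- (plus_IZR a 1). f_equal. apply floorR_unique. rewrite plus_IZR. split.
        + apply (Rmult_le_reg_l (INR q)); auto. rewrite Hy. lra.
        + apply (Rmult_lt_reg_l (INR q)); auto. rewrite Hy. lra. }
  rewrite sumR_plus, sumR_const, sumR_indicator_tail by lia.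
  fold n. rewrite Hn, plus_IZR, mult_IZR, <- HQ, Hbn. lra.
Qed.

Definition mul_residue (q : nat) (p : Z) (j : nat) : nat :=
  Z.to_nat ((Z.of_nat j * p) mod Z.of_nat q).

Lemma mul_residue_lt q p j : (1 <= q)%nat -> (mul_residue q p j < q)%nat.
Proof.
  intros Hq. unfold mul_residue.
  assert (H := Z.mod_pos_bound (Z.of_nat j * p) (Z.of_nat q) ltac:(lia)). lia.
Qed.

Lemma mul_residue_inj q p i j : (1 <= q)%nat -> Z.gcd (Z.of_nat q) p = 1%Z ->
  (i < q)%nat -> (j < q)%nat -> mul_residue q p i = mul_residue q p j -> i = j.
Proof.
  intros Hq Hg Hi Hj E. unfold mul_residue in E.
  set (qz := Z.of_nat q) in *.
  assert (B1 := Z.mod_pos_bound (Z.of_nat i * p) qz ltac:(unfold qz; lia)).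
  assert (B2 := Z.mod_pos_bound (Z.of_nat j * p) qz ltac:(unfold qz; lia)).
  assert (D1 := Z_div_mod_eq_full (Z.of_nat i * p) qz).
  assert (D2 := Z_div_mod_eq_full (Z.of_nat j * p) qz).
  assert (Hd : (qz | p * (Z.of_nat i - Z.of_nat j))%Z).
  { exists ((Z.of_nat i * p) / qz - (Z.of_nat j * p) / qz)%Z. lia. }
  apply Z.gauss in Hd; auto.
  destruct Hd as [k Hk]. unfold qz in Hk.
  assert (k = 0%Z) by nia. subst k. lia.
Qed.

Definition floor_quotient_sum (q : nat) (p : Z) : R :=
  sumR (fun j => IZR ((Z.of_nat j * p) / Z.of_nat q)) q.

(* Splitting [j p = q (j p / q) + (j p mod q)] and permuting the residues reduces
   the sum to Hermite's identity. *)
Lemma floor_sum_rational_slope q p x : (1 <= q)%nat -> Z.gcd (Z.of_nat q) p = 1%Z ->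
  sumR (fun j => IZR (floorR (x + INR j * IZR p / INR q))) q
  = floor_quotient_sum q p + IZR (floorR (INR q * x)).
Proof.
  intros Hq Hg.
  assert (HQp : 0 < INR q) by (apply lt_0_INR; lia).
  rewrite (sumR_ext _ (fun j => IZR ((Z.of_nat j * p) / Z.of_nat q)
             + IZR (floorR (x + INR (mul_residue q p j) / INR q)))).
  2:{ intros j Hj.
      set (m := (Z.of_nat j * p)%Z).
      assert (Hm := Z_div_mod_eq_full m (Z.of_nat q)).
      assert (Hr : INR (mul_residue q p j) = IZR (m mod Z.of_nat q)).
      { assert (Hb := Z.mod_pos_bound m (Z.of_nat q) ltac:(lia)).
        unfold mul_residue. fold m. rewrite INR_IZR_INZ, Z2Nat.id by lia. reflexivity. }
      assert (Hm' : INR j * IZR p = INR q * IZR (m / Z.of_nat q) + IZR (m mod Z.of_nat q)).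
      { rewrite INR_IZR_INZ, INR_IZR_INZ, <- !mult_IZR, <- plus_IZR. f_equal. lia. }
      assert (E : x + INR j * IZR p / INR q
                  = (x + INR (mul_residue q p j) / INR q) + IZR (m / Z.of_nat q))
        by (rewrite Hr, Hm'; field; lra).
      rewrite E, floorR_add_IZR, plus_IZR. lra. }
  rewrite sumR_plus. unfold floor_quotient_sum. f_equal.
  rewrite (sumR_permute (fun r => IZR (floorR (x + INR r / INR q))) (mul_residue q p) q).
  - apply hermite_identity; auto.
  - intros i j Hi Hj. apply mul_residue_inj; auto.
  - intros j _. apply mul_residue_lt; auto.
Qed.

Lemma floor_sum_near_rational q p th z : (1 <= q)%nat -> Z.gcd (Z.of_nat q) p = 1%Z ->
  Rabs (INR q * th - IZR p) <= 1 / INR q ->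
  floor_quotient_sum q p + INR q * z - 2 < sumR (fun j => IZR (floorR (z + INR j * th))) q
  <= floor_quotient_sum q p + INR q * z + 1.
Proof.
  intros Hq Hg He.
  assert (HQp : 0 < INR q) by (apply lt_0_INR; lia).
  assert (Hd : forall j, (j < q)%nat ->
     - (1 / INR q) <= INR j * th - INR j * IZR p / INR q <= 1 / INR q).
  { intros j Hj. set (e := INR q * th - IZR p) in *.
    replace (INR j * th - INR j * IZR p / INR q) with ((INR j / INR q) * e)
      by (unfold e; field; lra).
    assert (W : 0 <= INR j / INR q <= 1).
    { assert (0 <= INR j) by apply pos_INR. assert (INR j <= INR q) by (apply le_INR; lia).
      split.
      - apply Rmult_le_pos; [lra|]. apply Rlt_le, Rinv_0_lt_compat; lra.
      - apply (Rmult_le_reg_r (INR q)); auto. unfold Rdiv. rewrite Rmult_assoc, Rinv_l; lra. }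
    apply Rabs_le_between in He. nra. }
  split.
  - assert (L1 : floor_quotient_sum q p + IZR (floorR (INR q * (z - 1 / INR q)))
                 <= sumR (fun j => IZR (floorR (z + INR j * th))) q).
    { rewrite <- floor_sum_rational_slope; auto. apply sumR_le. intros j Hj.
      apply IZR_le, floorR_mono. specialize (Hd j Hj). lra. }
    destruct (floorR_spec (INR q * (z - 1 / INR q))).
    replace (INR q * (z - 1 / INR q)) with (INR q * z - 1) in * by (field; lra).
    lra.
  - assert (L1 : sumR (fun j => IZR (floorR (z + INR j * th))) q
                 <= floor_quotient_sum q p + IZR (floorR (INR q * (z + 1 / INR q)))).
    { rewrite <- floor_sum_rational_slope; auto. apply sumR_le. intros j Hj.
      apply IZR_le, floorR_mono. specialize (Hd j Hj). lra. }
    destruct (floorR_spec (INR q * (z + 1 / INR q))).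
    replace (INR q * (z + 1 / INR q)) with (INR q * z + 1) in * by (field; lra).
    lra.
Qed.

Definition window_count (L y : R) : R := IZR (floorR y) - IZR (floorR (y - L)).

Lemma window_count_bounds L y : 0 < L < 1 -> 0 <= window_count L y <= 1.
Proof.
  intros HL. unfold window_count.
  assert (H1 := floorR_mono (y - L) y ltac:(lra)).
  assert (H2 : (floorR y - 1 <= floorR (y - L))%Z).
  { apply floorR_ge. rewrite minus_IZR. destruct (floorR_spec y). lra. }
  apply IZR_le in H1. apply IZR_le in H2. rewrite minus_IZR in H2. lra.
Qed.

Lemma window_count_01 L y : 0 < L < 1 -> window_count L y = 0 \/ window_count L y = 1.
Proof.
  intros HL. destruct (window_count_bounds L y HL) as [B1 B2]. unfold window_count in *.
  rewrite <- minus_IZR in *. apply le_IZR in B1. apply le_IZR in B2.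
  destruct (Z.eq_dec (floorR y - floorR (y - L)) 0) as [e|e].
  - left. rewrite e. reflexivity.
  - right. replace (floorR y - floorR (y - L))%Z with 1%Z by lia. reflexivity.
Qed.

Lemma window_count_1_iff L y : 0 < L < 1 ->
  window_count L y = 1 <-> exists z : Z, y - L < IZR z <= y.
Proof.
  intros HL. split.
  - intros H. exists (floorR y). unfold window_count in H.
    destruct (floorR_spec y). destruct (floorR_spec (y - L)). split; lra.
  - intros [z [H1 H2]]. unfold window_count.
    assert (A1 := floorR_ge z y H2).
    assert (A2 := floorR_lt z (y - L) H1).
    assert (A3 : (floorR y - 1 <= floorR (y - L))%Z).
    { apply floorR_ge. rewrite minus_IZR. destruct (floorR_spec y). lra. }
    rewrite <- minus_IZR. replace (floorR y - floorR (y - L))%Z with 1%Z by lia. reflexivity.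
Qed.

Lemma window_sum_block q p x th L : (1 <= q)%nat -> Z.gcd (Z.of_nat q) p = 1%Z ->
  Rabs (INR q * th - IZR p) <= 1 / INR q -> 0 < L < 1 ->
  Rabs (sumR (fun j => window_count L (x + INR j * th)) q - INR q * L) <= 3.
Proof.
  intros Hq Hg He HL. unfold window_count. rewrite sumR_minus.
  rewrite (sumR_ext (fun j => IZR (floorR (x + INR j * th - L)))
                    (fun j => IZR (floorR ((x - L) + INR j * th)))).
  2:{ intros j _. do 2 f_equal. lra. }
  destruct (floor_sum_near_rational q p th x Hq Hg He).
  destruct (floor_sum_near_rational q p th (x - L) Hq Hg He).
  apply Rabs_le. lra.
Qed.

(* Cut the range into blocks of length [q], each contributing an error at most 3,
   plus an initial segment shorter than [q]. *)
Lemma window_sum_discrepancy th c L q p K : (1 <= q)%nat -> Z.gcd (Z.of_nat q) p = 1%Z ->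
  Rabs (INR q * th - IZR p) <= 1 / INR q -> 0 < L < 1 ->
  Rabs (sumR (fun j => window_count L (c + INR (S j) * th)) K - INR K * L)
    <= 3 * INR K / INR q + INR q.
Proof.
  intros Hq Hg He HL.
  assert (HQp : 0 < INR q) by (apply lt_0_INR; lia).
  induction K as [K IH] using lt_wf_ind.
  destruct (Nat.lt_ge_cases K q) as [Hk|Hk].
  - assert (Hb := sumR_bounds (fun j => window_count L (c + INR (S j) * th)) K
                    (fun j _ => window_count_bounds L _ HL)).
    assert (HK : INR K <= INR q) by (apply le_INR; lia).
    assert (0 <= INR K) by apply pos_INR.
    assert (0 <= 3 * INR K / INR q) by (apply Rmult_le_pos; [lra|]; apply Rlt_le, Rinv_0_lt_compat; lra).
    apply Rabs_le. nra.
  - replace K with ((K - q) + q)%nat by lia.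
    rewrite sumR_split.
    rewrite (sumR_ext _ (fun j => window_count L ((c + INR (S (K - q)) * th) + INR j * th)) q).
    2:{ intros j _. cbv beta. f_equal. rewrite !S_INR, plus_INR. ring. }
    specialize (IH (K - q)%nat ltac:(lia)).
    assert (B := window_sum_block q p (c + INR (S (K - q)) * th) th L Hq Hg He HL).
    rewrite plus_INR.
    replace (3 * (INR (K - q) + INR q) / INR q) with (3 * INR (K - q) / INR q + 3) by (field; lra).
    apply Rabs_le. apply Rabs_le_between in IH. apply Rabs_le_between in B. lra.
Qed.

Lemma pigeonhole Q (f : nat -> nat) : (forall j, (j <= Q)%nat -> (f j < Q)%nat) ->
  exists i j, (i < j <= Q)%nat /\ f i = f j.
Proof.
  intros Hf. apply NNPP. intros Hn.
  assert (ND : NoDup (map f (seq 0 (S Q)))).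
  { apply FinFun.Injective_map_NoDup_in; [|apply seq_NoDup].
    intros x y Hx Hy E. apply in_seq in Hx, Hy.
    destruct (Nat.lt_total x y) as [h|[h|h]]; auto; exfalso; apply Hn.
    - exists x, y. split; auto. lia.
    - exists y, x. split; auto. lia. }
  assert (Inc : incl (map f (seq 0 (S Q))) (seq 0 Q)).
  { intros y Hy. apply in_map_iff in Hy. destruct Hy as [x [<- Hx]].
    apply in_seq in Hx. apply in_seq. specialize (Hf x ltac:(lia)). lia. }
  assert (H := NoDup_incl_length ND Inc).
  rewrite length_map, !length_seq in H. lia.
Qed.

Lemma approximation_coprime th Q q0 p0 : (1 <= q0 <= Q)%nat ->
  Rabs (INR q0 * th - IZR p0) <= 1 / INR Q ->
  exists q p, (1 <= q <= Q)%nat /\ Z.gcd (Z.of_nat q) p = 1%Z /\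
    Rabs (INR q * th - IZR p) <= 1 / INR Q.
Proof.
  intros Hq He.
  set (g := Z.gcd p0 (Z.of_nat q0)).
  assert (Hg0 : (0 <= g)%Z) by apply Z.gcd_nonneg.
  assert (Hgn : g <> 0%Z) by (intros E; apply Z.gcd_eq_0 in E; lia).
  destruct (Z.gcd_divide_r p0 (Z.of_nat q0)) as [k Hk]. fold g in Hk.
  destruct (Z.gcd_divide_l p0 (Z.of_nat q0)) as [k' Hk']. fold g in Hk'.
  assert (Hc := Z.gcd_div_gcd p0 (Z.of_nat q0) g Hgn eq_refl).
  rewrite Hk, Hk' in Hc. rewrite !Z.div_mul in Hc by auto.
  assert (Hkpos : (1 <= k)%Z) by nia.
  exists (Z.to_nat k), k'. split; [nia|]. split.
  - rewrite Z2Nat.id by lia. rewrite Z.gcd_comm. auto.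
  - rewrite INR_IZR_INZ, Z2Nat.id by lia.
    rewrite INR_IZR_INZ, Hk, Hk', !mult_IZR in He.
    replace (IZR k * IZR g * th - IZR k' * IZR g) with (IZR g * (IZR k * th - IZR k')) in He
      by ring.
    rewrite Rabs_mult, Rabs_pos_eq in He by (apply IZR_le; lia).
    assert (1 <= IZR g) by (apply IZR_le; lia).
    assert (0 <= Rabs (IZR k * th - IZR k')) by apply Rabs_pos.
    nra.
Qed.

(* Pigeonhole on the [Q] intervals [[i/Q, (i+1)/Q)] containing the fractional parts
   of [0, th, ..., Q th]. *)
Lemma dirichlet_approximation th Q : (1 <= Q)%nat ->
  exists q p, (1 <= q <= Q)%nat /\ Z.gcd (Z.of_nat q) p = 1%Z /\
    Rabs (INR q * th - IZR p) <= 1 / INR Q.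
Proof.
  intros HQ.
  assert (HQp : 0 < INR Q) by (apply lt_0_INR; lia).
  set (fr := fun y => y - IZR (floorR y)).
  assert (Hfr : forall y, 0 <= fr y < 1) by (intros y; unfold fr; destruct (floorR_spec y); lra).
  assert (Hb : forall j, (0 <= floorR (INR Q * fr (INR j * th))%R < Z.of_nat Q)%Z).
  { intros j. specialize (Hfr (INR j * th)). split.
    - apply floorR_ge. nra.
    - apply floorR_lt. rewrite <- INR_IZR_INZ. nra. }
  destruct (pigeonhole Q (fun j => Z.to_nat (floorR (INR Q * fr (INR j * th)))))
    as [i [j [Hij E]]].
  { intros j _. specialize (Hb j). lia. }
  apply (approximation_coprime th Q (j - i) (floorR (INR j * th) - floorR (INR i * th))).
  - lia.
  - assert (Ez : floorR (INR Q * fr (INR i * th)) = floorR (INR Q * fr (INR j * th))).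
    { assert (H1 := Hb i). assert (H2 := Hb j). lia. }
    destruct (floorR_spec (INR Q * fr (INR i * th))) as [A1 A2].
    destruct (floorR_spec (INR Q * fr (INR j * th))) as [B1 B2].
    rewrite Ez in A1, A2.
    rewrite minus_INR by lia. rewrite minus_IZR.
    replace ((INR j - INR i) * th - (IZR (floorR (INR j * th)) - IZR (floorR (INR i * th))))
      with (fr (INR j * th) - fr (INR i * th)) by (unfold fr; ring).
    assert (Hd : Rabs (INR Q * (fr (INR j * th) - fr (INR i * th))) <= 1) by (apply Rabs_le; lra).
    rewrite Rabs_mult, Rabs_pos_eq in Hd by lra.
    apply (Rmult_le_reg_l (INR Q)); auto. unfold Rdiv. rewrite Rmult_1_l, Rinv_r; lra.
Qed.

Lemma window_sum_dirichlet th c L Q : (1 <= Q)%nat -> 0 < L < 1 ->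
  exists q p, (1 <= q <= Q)%nat /\ Rabs (INR q * th - IZR p) <= 1 / INR Q /\
  forall K, Rabs (sumR (fun j => window_count L (c + INR (S j) * th)) K - INR K * L)
              <= 3 * INR K / INR q + INR Q.
Proof.
  intros HQ HL.
  destruct (dirichlet_approximation th Q HQ) as [q [p [Hq [Hg Hqp]]]].
  exists q, p. split; [auto|]. split; [auto|]. intros K.
  assert (HQq : INR q <= INR Q) by (apply le_INR; lia).
  assert (Hqr : 1 <= INR q) by (apply (le_INR 1); lia).
  assert (Hqp' : Rabs (INR q * th - IZR p) <= 1 / INR q).
  { eapply Rle_trans; [apply Hqp|]. apply Rmult_le_compat_l; [lra|].
    apply Rinv_le_contravar; lra. }
  assert (H := window_sum_discrepancy th c L q p K ltac:(lia) Hg Hqp' HL). lra.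
Qed.

Lemma dist_Z_nonneg x : 0 <= dist_Z x.
Proof. unfold dist_Z. destruct (floorR_spec x). apply Rmin_glb; lra. Qed.

Lemma dist_Z_le x m : dist_Z x <= Rabs (x - IZR m).
Proof.
  unfold dist_Z. destruct (floorR_spec x).
  destruct (Z_le_gt_dec m (floorR x)) as [h|h].
  - apply IZR_le in h. eapply Rle_trans; [apply Rmin_l|].
    unfold Rabs; destruct (Rcase_abs _); lra.
  - assert (IZR (floorR x) + 1 <= IZR m) by (rewrite <- plus_IZR; apply IZR_le; lia).
    eapply Rle_trans; [apply Rmin_r|]. unfold Rabs; destruct (Rcase_abs _); lra.
Qed.

Lemma dist_Z_irrational_pos a n : irrational a -> (1 <= n)%nat -> 0 < dist_Z (a * INR n).
Proof.
  intros Hi Hn. unfold dist_Z. destruct (floorR_spec (a * INR n)) as [[H1|H1] H2].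
  - apply Rmin_glb_lt; lra.
  - exfalso. apply (Hi (floorR (a * INR n)) (Z.of_nat n)); [lia|].
    rewrite H1, <- INR_IZR_INZ. field. apply not_0_INR. lia.
Qed.

Lemma finite_min_pos (v : nat -> R) M : (forall n, (1 <= n)%nat -> 0 < v n) ->
  exists c, c > 0 /\ forall n, (1 <= n < M)%nat -> c <= v n.
Proof.
  intros Hv. induction M as [|M [c [Hc H]]].
  - exists 1. split; [lra|]. intros; lia.
  - exists (Rmin c (v (Nat.max M 1))). split.
    + apply Rmin_glb_lt; auto. apply Hv. lia.
    + intros n Hn. destruct (Nat.eq_dec n M) as [->|h].
      * rewrite Nat.max_l by lia. apply Rmin_r.
      * eapply Rle_trans; [apply Rmin_l|]. apply H. lia.
Qed.

(* Above the type, [n^t ||a n||] is eventually bounded below; the finitely many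
   earlier terms are positive because [a] is irrational. *)
Lemma type_lower_bound a tau t : irrational a -> has_type a tau -> t > tau ->
  exists c, c > 0 /\ forall n, (1 <= n)%nat -> c <= Rpower (INR n) t * dist_Z (a * INR n).
Proof.
  intros Hi [Hub _] Ht.
  assert (Hnot : ~ type_set a t) by (intros Hs; specialize (Hub t Hs); lra).
  assert (Hex : exists eps M, eps > 0 /\ forall n, (n >= M)%nat -> (n >= 1)%nat ->
                  eps <= Rpower (INR n) t * dist_Z (a * INR n)).
  { apply NNPP. intros Hn. apply Hnot. intros eps Heps M. apply NNPP. intros Hn2.
    apply Hn. exists eps, M. split; auto. intros n h1 h2. apply Rnot_lt_le. intros Hl.
    apply Hn2. exists n. auto. }
  destruct Hex as [eps [M [He HM]]].
  destruct (finite_min_pos (fun n => Rpower (INR n) t * dist_Z (a * INR n)) M) as [c [Hc Hf]].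
  { intros n Hn. apply Rmult_lt_0_compat; [apply Rpower_pos|]. apply dist_Z_irrational_pos; auto. }
  exists (Rmin eps c). split; [apply Rmin_glb_lt; auto|].
  intros n Hn. destruct (Nat.lt_ge_cases n M).
  - eapply Rle_trans; [apply Rmin_r|]. apply Hf. lia.
  - eapply Rle_trans; [apply Rmin_l|]. apply HM; lia.
Qed.

(* For [t <= 0] Dirichlet's theorem gives [n^t ||a n|| <= 1/Q] with [n <= Q],
   contradicting any fixed positive lower bound. *)
Lemma above_type_pos a tau t : irrational a -> has_type a tau -> t > tau -> 0 < t.
Proof.
  intros Hi Hh Ht. destruct (type_lower_bound a tau t Hi Hh Ht) as [c [Hc H]].
  apply Rnot_le_lt. intros Ht0.
  destruct (archimed (1 / c)) as [A1 _].
  assert (Hcc : 0 < 1 / c) by (unfold Rdiv; rewrite Rmult_1_l; apply Rinv_0_lt_compat; lra).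
  assert (Hup : (0 < up (1 / c))%Z) by (apply lt_IZR; lra).
  set (Q := Z.to_nat (up (1 / c))).
  assert (HQ : INR Q = IZR (up (1 / c)))
    by (unfold Q; rewrite INR_IZR_INZ, Z2Nat.id by lia; reflexivity).
  destruct (dirichlet_approximation a Q ltac:(unfold Q; lia)) as [q [p [Hq [_ He]]]].
  specialize (H q ltac:(lia)).
  assert (Hp1 : Rpower (INR q) t <= 1).
  { rewrite <- (Rpower_O (INR q)) by (apply lt_0_INR; lia).
    apply Rle_Rpower; auto. apply (le_INR 1). lia. }
  assert (Hd := dist_Z_le (a * INR q) p).
  assert (Hd0 := dist_Z_nonneg (a * INR q)).
  assert (Hpos := Rpower_pos (INR q) t).
  rewrite Rmult_comm in He.
  assert (Hc1 : c <= 1 / INR Q) by nra.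
  rewrite HQ in Hc1.
  assert (HQc : c * IZR (up (1 / c)) <= 1).
  { apply (Rmult_le_compat_r (IZR (up (1 / c)))) in Hc1; [|lra].
    replace (1 / IZR (up (1 / c)) * IZR (up (1 / c))) with 1 in Hc1 by (field; lra). lra. }
  assert (IZR (up (1 / c)) * c > 1).
  { replace 1 with ((1 / c) * c) at 2 by (field; lra). apply Rmult_lt_compat_r; lra. }
  lra.
Qed.

Lemma type_nonneg a tau : irrational a -> has_type a tau -> 0 <= tau.
Proof.
  intros Hi Hh. apply Rnot_lt_le. intros Hn.
  assert (H := above_type_pos a tau (tau / 2) Hi Hh ltac:(lra)). lra.
Qed.

(* The relevant case is [P >= 1] with [|M/a - P| < 1]; then [P <= 2 M] and
   [||a P|| <= a |M/a - P|], so the bound at [P] transfers to [M]. *)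
Lemma type_lower_bound_reciprocal a tau t : a > 1 -> irrational a -> has_type a tau -> t > tau ->
  exists c, c > 0 /\ forall (M : nat) (P : Z), (1 <= M)%nat ->
    c <= Rpower (INR M) t * Rabs (INR M / a - IZR P).
Proof.
  intros Ha Hi Hh Ht.
  assert (Htp := above_type_pos a tau t Hi Hh Ht).
  destruct (type_lower_bound a tau t Hi Hh Ht) as [c [Hc H]].
  assert (HR2 := Rpower_pos 2 t).
  assert (Hia := inv_pos_lt_1 a Ha).
  exists (Rmin (1 / a) (c / (a * Rpower 2 t))). split.
  { apply Rmin_glb_lt; [lra|]. apply Rmult_lt_0_compat; auto. apply Rinv_0_lt_compat. nra. }
  intros M P HM.
  assert (HMr : 1 <= INR M) by (apply (le_INR 1); lia).
  assert (HpM := Rpower_ge_1 (INR M) t HMr ltac:(lra)).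
  assert (Hab := Rabs_pos (INR M / a - IZR P)).
  assert (HMa : 1 / a <= INR M / a) by (apply Rmult_le_compat_r; lra).
  destruct (Z_le_gt_dec P 0) as [hP|hP].
  - eapply Rle_trans; [apply Rmin_l|]. apply IZR_le in hP.
    assert (1 / a <= Rabs (INR M / a - IZR P)) by (rewrite Rabs_pos_eq; lra).
    nra.
  - destruct (Rle_lt_dec 1 (Rabs (INR M / a - IZR P))) as [h1|h1].
    + eapply Rle_trans; [apply Rmin_l|]. nra.
    + eapply Rle_trans; [apply Rmin_r|].
      set (n := Z.to_nat P).
      assert (Hn : INR n = IZR P) by (unfold n; rewrite INR_IZR_INZ, Z2Nat.id by lia; reflexivity).
      specialize (H n ltac:(unfold n; lia)).
      assert (Hd := dist_Z_le (a * INR n) (Z.of_nat M)).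
      rewrite <- INR_IZR_INZ in Hd.
      replace (a * INR n - INR M) with (- a * (INR M / a - IZR P)) in Hd by (rewrite Hn; field; lra).
      rewrite Rabs_mult, Rabs_Ropp, (Rabs_pos_eq a) in Hd by lra.
      assert (Hle : INR n <= 2 * INR M).
      { apply Rlt_le, Rabs_le_between in h1. rewrite Hn.
        assert (INR M / a <= INR M) by (apply (Rmult_le_reg_r a); [lra|]; field_simplify; nra).
        lra. }
      assert (Hpw : Rpower (INR n) t <= Rpower 2 t * Rpower (INR M) t).
      { rewrite Rpower_mult_distr by lra. apply Rle_Rpower_l; [lra|].
        split; [rewrite Hn; apply IZR_lt; lia|lra]. }
      assert (Hd0 := dist_Z_nonneg (a * INR n)).
      assert (Hpn := Rpower_pos (INR n) t).
      assert (c <= Rpower 2 t * a * (Rpower (INR M) t * Rabs (INR M / a - IZR P))).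
      { eapply Rle_trans; [apply H|].
        eapply Rle_trans; [apply Rmult_le_compat; [lra|lra|apply Hpw|apply Hd]|].
        nra. }
      apply (Rmult_le_reg_l (a * Rpower 2 t)); [nra|].
      replace (a * Rpower 2 t * (c / (a * Rpower 2 t))) with c by (field; lra).
      nra.
Qed.

Lemma decP_true (P : Prop) : P -> decP P = true.
Proof. intros H. unfold decP. destruct (excluded_middle_informative P); tauto. Qed.

Lemma decP_false (P : Prop) : ~ P -> decP P = false.
Proof. intros H. unfold decP. destruct (excluded_middle_informative P); tauto. Qed.

Definition beatty_multiple_indicator a b d k : R :=
  if decP (in_beatty a b (Z.of_nat (d * k))) then 1 else 0.

Lemma beatty_div_count_succ a b d N : beatty_div_count a b d (S N) =
  (beatty_div_count a b d N +
   if decP (Nat.divide d (S N) /\ in_beatty a b (Z.of_nat (S N))) then 1 else 0)%nat.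
Proof.
  unfold beatty_div_count. rewrite seq_S, filter_app, length_app. simpl.
  replace (1 + N)%nat with (S N) by lia.
  destruct (decP _); simpl; lia.
Qed.

Lemma div_succ_cases d N : (1 <= d)%nat ->
  (Nat.divide d (S N) /\ S N / d = S (N / d) /\ d * S (N / d) = S N)%nat \/
  (~ Nat.divide d (S N) /\ S N / d = N / d)%nat.
Proof.
  intros Hd.
  assert (H1 := Nat.div_mod N d ltac:(lia)).
  assert (H2 := Nat.mod_upper_bound N d ltac:(lia)).
  set (a := (N / d)%nat) in *. set (b := (N mod d)%nat) in *.
  destruct (Nat.eq_dec (S b) d) as [E|E].
  - left. assert (Hs : S N = (d * S a)%nat) by lia.
    split; [exists (S a); lia|]. split; [|lia].
    rewrite Hs, Nat.mul_comm, Nat.div_mul by lia. reflexivity.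
  - right. split.
    + intros [k Hk]. destruct (Nat.le_gt_cases k a) as [h|h]; nia.
    + symmetry. apply (Nat.div_unique (S N) d a (S b)); lia.
Qed.

Lemma beatty_div_count_sum a b d N : (1 <= d)%nat ->
  INR (beatty_div_count a b d N) = sumR (fun j => beatty_multiple_indicator a b d (S j)) (N / d).
Proof.
  intros Hd. induction N as [|N IH].
  - rewrite Nat.Div0.div_0_l. reflexivity.
  - rewrite beatty_div_count_succ, plus_INR, IH.
    destruct (div_succ_cases d N Hd) as [[Hdv [E1 E2]]|[Hdv E1]].
    + rewrite E1. cbn [sumR]. f_equal. unfold beatty_multiple_indicator. rewrite E2.
      destruct (classic (in_beatty a b (Z.of_nat (S N)))) as [h|h].
      * rewrite !decP_true by auto. reflexivity.
      * rewrite !decP_false by tauto. reflexivity.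
    + rewrite E1, decP_false by tauto. simpl. lra.
Qed.

Lemma beatty_window a b (n : Z) : a > 1 ->
  (exists m : Z, floorR (a * IZR m + b) = n) <-> window_count (1 / a) ((b - IZR n) / a) = 1.
Proof.
  intros Ha. rewrite window_count_1_iff by (apply inv_pos_lt_1; auto).
  set (u := (b - IZR n) / a).
  assert (Hu : a * u = b - IZR n) by (unfold u; field; lra).
  assert (Hu1 : a * (u - 1 / a) = a * u - 1) by (field; lra).
  split.
  - intros [m Hm]. exists (- m)%Z. destruct (floorR_spec (a * IZR m + b)) as [F1 F2].
    rewrite Hm in F1, F2. rewrite opp_IZR. split.
    + apply (Rmult_lt_reg_l a); [lra|]. lra.
    + apply (Rmult_le_reg_l a); [lra|]. lra.
  - intros [z [H1 H2]]. exists (- z)%Z. apply floorR_unique. rewrite opp_IZR.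
    assert (a * (u - 1 / a) < a * IZR z) by (apply Rmult_lt_compat_l; lra).
    assert (a * IZR z <= a * u) by (apply Rmult_le_compat_l; lra).
    lra.
Qed.

Lemma beatty_multiple_window a b d k : a > 1 -> (1 <= d)%nat ->
  beatty_multiple_indicator a b d k <= window_count (1 / a) (b / a + INR k * (- INR d / a)) /\
  (INR k > b ->
   beatty_multiple_indicator a b d k = window_count (1 / a) (b / a + INR k * (- INR d / a))).
Proof.
  intros Ha Hd.
  replace (b / a + INR k * (- INR d / a)) with ((b - IZR (Z.of_nat (d * k))) / a)
    by (rewrite <- INR_IZR_INZ, mult_INR; field; lra).
  assert (HL := inv_pos_lt_1 a Ha).
  assert (Hbeatty : in_beatty a b (Z.of_nat (d * k)) ->
                    window_count (1 / a) ((b - IZR (Z.of_nat (d * k))) / a) = 1).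
  { intros [m [_ Hm]]. apply (beatty_window a b _ Ha). exists (Z.of_nat m).
    rewrite <- INR_IZR_INZ. auto. }
  unfold beatty_multiple_indicator. split.
  - destruct (classic (in_beatty a b (Z.of_nat (d * k)))) as [h|h].
    + rewrite decP_true by auto. rewrite Hbeatty by auto. lra.
    + rewrite decP_false by auto. apply window_count_bounds; auto.
  - intros Hk. destruct (window_count_01 (1 / a) ((b - IZR (Z.of_nat (d * k))) / a) HL) as [h|h].
    + rewrite decP_false; [auto|]. intros Hb. rewrite Hbeatty in h by auto. lra.
    + rewrite h. apply (beatty_window a b _ Ha) in h. destruct h as [m Hm].
      destruct (floorR_spec (a * IZR m + b)) as [F1 _]. rewrite Hm in F1.
      rewrite <- INR_IZR_INZ, mult_INR in F1.
      assert (INR k <= INR d * INR k).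
      { assert (1 <= INR d) by (apply (le_INR 1); lia). assert (0 <= INR k) by apply pos_INR. nra. }
      assert (Hm1 : (1 <= m)%Z).
      { destruct (Z_le_gt_dec 1 m); auto. assert (IZR m <= 0) by (apply IZR_le; lia). nra. }
      rewrite decP_true; auto.
      exists (Z.to_nat m). split; [lia|]. rewrite INR_IZR_INZ, Z2Nat.id by lia. auto.
Qed.

Lemma sumR_vanishing_beyond (g : nat -> R) B :
  (forall j, 0 <= g j <= 1) -> (forall j, INR (S j) > B -> g j = 0) ->
  forall K, sumR g K <= Rabs B.
Proof.
  intros H1 H2 K.
  assert (Hstrong : sumR g K <= INR K /\ sumR g K <= Rabs B).
  { induction K as [|K [IH1 IH2]].
    - simpl. split; [lra|apply Rabs_pos].
    - cbn [sumR]. rewrite S_INR.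
      destruct (Rlt_le_dec B (INR (S K))) as [h|h].
      + rewrite (H2 K h). split; lra.
      + specialize (H1 K). rewrite S_INR in h. assert (B <= Rabs B) by apply Rle_abs.
        split; lra. }
  apply Hstrong.
Qed.

Lemma beatty_div_count_window_sum a b d N : a > 1 -> (1 <= d)%nat ->
  Rabs (INR (beatty_div_count a b d N)
        - sumR (fun j => window_count (1 / a) (b / a + INR (S j) * (- INR d / a))) (N / d))
    <= Rabs b.
Proof.
  intros Ha Hd. rewrite beatty_div_count_sum by auto.
  set (w := fun j => window_count (1 / a) (b / a + INR (S j) * (- INR d / a))).
  set (ind := fun j => beatty_multiple_indicator a b d (S j)).
  assert (Hwind : forall j, ind j <= w j /\ (INR (S j) > b -> ind j = w j))
    by (intros j; apply beatty_multiple_window; auto).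
  assert (Hle : sumR ind (N / d) <= sumR w (N / d))
    by (apply sumR_le; intros j _; apply Hwind).
  assert (Hgap : sumR (fun j => w j - ind j) (N / d) <= Rabs b).
  { apply sumR_vanishing_beyond.
    - intros j. destruct (Hwind j) as [Hj _].
      assert (Hw := window_count_bounds (1 / a) (b / a + INR (S j) * (- INR d / a))
                      (inv_pos_lt_1 a Ha)).
      assert (0 <= ind j) by (unfold ind, beatty_multiple_indicator; destruct (decP _); lra).
      fold (w j) in Hw. lra.
    - intros j Hj. destruct (Hwind j) as [_ E]. rewrite E by auto. lra. }
  rewrite sumR_minus in Hgap.
  rewrite Rabs_minus_sym, Rabs_pos_eq; lra.
Qed.

Lemma exponent_shift_le tau eps : 0 <= tau -> 0 < eps ->
  (tau + eps) / (1 + (tau + eps)) <= tau / (1 + tau) + eps.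
Proof.
  intros Htau Heps.
  replace ((tau + eps) / (1 + (tau + eps))) with
    (tau / (1 + tau) + eps / ((1 + tau) * (1 + tau + eps))) by (field; lra).
  assert (eps / ((1 + tau) * (1 + tau + eps)) <= eps).
  { apply (Rmult_le_reg_r ((1 + tau) * (1 + tau + eps))); [nra|].
    replace (eps / ((1 + tau) * (1 + tau + eps)) * ((1 + tau) * (1 + tau + eps))) with eps
      by (field; lra).
    nra. }
  lra.
Qed.

Lemma nat_ceil_exists x : 1 <= x -> exists Q : nat, (1 <= Q)%nat /\ x <= INR Q <= x + 1.
Proof.
  intros Hx. destruct (archimed x) as [U1 U2].
  assert (Hup : (0 < up x)%Z) by (apply lt_IZR; lra).
  exists (Z.to_nat (up x)). rewrite INR_IZR_INZ, Z2Nat.id by lia. split; [lia|lra].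
Qed.

Lemma INR_div_mul_le N d : INR (N / d) * INR d <= INR N.
Proof. rewrite <- mult_INR. apply le_INR. rewrite Nat.mul_comm. apply Nat.Div0.mul_div_le. Qed.

Lemma floor_div_main_term a d N : a > 1 -> (1 <= d)%nat ->
  Rabs (INR (N / d) * (1 / a) - INR N / (a * INR d)) <= 1.
Proof.
  intros Ha Hd.
  assert (Hdr : 1 <= INR d) by (apply (le_INR 1); lia).
  assert (HK1 := INR_div_mul_le N d).
  assert (HK2 : INR N < INR (N / d) * INR d + INR d).
  { rewrite <- mult_INR, <- plus_INR. apply lt_INR.
    assert (H1 := Nat.div_mod N d ltac:(lia)). assert (H2 := Nat.mod_upper_bound N d ltac:(lia)).
    lia. }
  assert (HL := inv_pos_lt_1 a Ha).
  replace (INR N / (a * INR d)) with ((INR N / INR d) * (1 / a)) by (field; lra).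
  assert (INR (N / d) <= INR N / INR d).
  { apply (Rmult_le_reg_r (INR d)); [lra|]. field_simplify; lra. }
  assert (INR N / INR d < INR (N / d) + 1).
  { apply (Rmult_lt_reg_r (INR d)); [lra|]. field_simplify; lra. }
  apply Rabs_le. nra.
Qed.

(* If [c N^(t/(1+t)) <= (q d)^t] then [q d >= c^(1/t) N^(1/(1+t))], and [K d <= N]
   turns [K / q] into at most [N / (q d)]. *)
Lemma denominator_tradeoff c t N q d K : 0 < c -> 0 < t -> 1 <= N -> 1 <= q -> 1 <= d ->
  K * d <= N -> c * Rpower N (t / (1 + t)) <= Rpower (q * d) t ->
  3 * K / q <= 3 / Rpower c (1 / t) * Rpower N (t / (1 + t)).
Proof.
  intros Hc Ht HN Hq Hd HK Hqd.
  set (A := Rpower c (1 / t)). set (X := Rpower N (t / (1 + t))).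
  assert (HA := Rpower_pos c (1 / t)). assert (HX := Rpower_pos N (t / (1 + t))).
  fold A in HA. fold X in HX, Hqd.
  assert (Hroot : A * Rpower N (1 / (1 + t)) <= q * d).
  { replace (q * d) with (Rpower (Rpower (q * d) t) (1 / t)).
    2:{ rewrite Rpower_mult. replace (t * (1 / t)) with 1 by (field; lra). apply Rpower_1. nra. }
    replace (Rpower N (1 / (1 + t))) with (Rpower X (1 / t)).
    2:{ unfold X. rewrite Rpower_mult. f_equal. field. lra. }
    unfold A. rewrite (Rpower_mult_distr c X) by lra.
    apply Rle_Rpower_l; [apply Rlt_le, Rdiv_lt_0_compat; lra|]. split; [nra|auto]. }
  assert (HNsplit : N = Rpower N (1 / (1 + t)) * X).
  { unfold X. rewrite <- Rpower_plus. replace (1 / (1 + t) + t / (1 + t)) with 1 by (field; lra).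
    rewrite Rpower_1; lra. }
  assert (Hp1 := Rpower_pos N (1 / (1 + t))).
  apply (Rmult_le_reg_r (q * d * A)); [apply Rmult_lt_0_compat; nra|].
  replace (3 * K / q * (q * d * A)) with (3 * (K * d) * A) by (field; lra).
  replace (3 / A * X * (q * d * A)) with (3 * X * (q * d)) by (field; lra).
  assert (3 * (K * d) * A <= 3 * N * A) by nra.
  assert (3 * X * (A * Rpower N (1 / (1 + t))) <= 3 * X * (q * d)) by (apply Rmult_le_compat_l; lra).
  nra.
Qed.

Lemma approximation_denominator_bound a c t (Q q d : nat) (p : Z) : a > 1 ->
  (forall (M : nat) (P : Z), (1 <= M)%nat -> c <= Rpower (INR M) t * Rabs (INR M / a - IZR P)) ->
  (1 <= Q)%nat -> (1 <= q)%nat -> (1 <= d)%nat ->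
  Rabs (INR q * (- INR d / a) - IZR p) <= 1 / INR Q ->
  c * INR Q <= Rpower (INR q * INR d) t.
Proof.
  intros Ha Hdio HQ Hq Hd Happrox.
  assert (HQr : 0 < INR Q) by (apply lt_0_INR; lia).
  specialize (Hdio (q * d)%nat (- p)%Z ltac:(nia)).
  replace (INR (q * d) / a - IZR (- p)) with (- (INR q * (- INR d / a) - IZR p)) in Hdio
    by (rewrite mult_INR, opp_IZR; field; lra).
  rewrite Rabs_Ropp, mult_INR in Hdio.
  assert (Hpw := Rpower_pos (INR q * INR d) t).
  assert (Hcq : c <= Rpower (INR q * INR d) t * (1 / INR Q))
    by (eapply Rle_trans; [apply Hdio|]; apply Rmult_le_compat_l; lra).
  apply (Rmult_le_compat_r (INR Q)) in Hcq; [|lra].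
  replace (Rpower (INR q * INR d) t * (1 / INR Q) * INR Q) with (Rpower (INR q * INR d) t)
    in Hcq by (field; lra).
  exact Hcq.
Qed.

Theorem lemma4p6 (alpha beta tau : R) :
  alpha > 1 -> irrational alpha -> has_type alpha tau ->
  exists eps0 : R, eps0 > 0 /\
  forall eps : R, 0 < eps < eps0 ->
  exists C : R, forall d N : nat, (d >= 1)%nat -> (N >= 1)%nat ->
    Rabs (INR (beatty_div_count alpha beta d N) - INR N / (alpha * INR d))
      <= C * Rpower (INR N) (tau / (1 + tau) + eps).
Proof.
  intros Ha Hi Hh. exists 1. split; [lra|]. intros eps [Heps _].
  assert (Htau := type_nonneg alpha tau Hi Hh).
  set (t := tau + eps).
  destruct (type_lower_bound_reciprocal alpha tau t Ha Hi Hh ltac:(unfold t; lra))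
    as [c [Hc Hdio]].
  set (A := Rpower c (1 / t)).
  assert (HA : 0 < A) by apply Rpower_pos.
  exists (Rabs beta + 3 / A + 3). intros d N Hd HN.
  assert (HNr : 1 <= INR N) by (apply (le_INR 1); lia).
  assert (Hdr : 1 <= INR d) by (apply (le_INR 1); lia).
  set (X := Rpower (INR N) (t / (1 + t))).
  assert (HX1 : 1 <= X) by (apply Rpower_ge_1; [lra|]; apply Rlt_le, Rdiv_lt_0_compat; unfold t; lra).
  assert (HXle : X <= Rpower (INR N) (tau / (1 + tau) + eps))
    by (apply Rle_Rpower; [lra|]; apply exponent_shift_le; lra).
  destruct (nat_ceil_exists X HX1) as [Q [HQ [HXQ HQX]]].
  destruct (window_sum_dirichlet (- INR d / alpha) (beta / alpha) (1 / alpha) Q HQ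
              (inv_pos_lt_1 alpha Ha)) as [q [p [Hq [Happrox Hdisc]]]].
  assert (Hqr : 1 <= INR q) by (apply (le_INR 1); lia).
  assert (Hqd : c * X <= Rpower (INR q * INR d) t).
  { assert (H := approximation_denominator_bound alpha c t Q q d p Ha Hdio HQ
                   ltac:(lia) ltac:(lia) Happrox).
    apply Rle_trans with (c * INR Q); [apply Rmult_le_compat_l|]; lra. }
  assert (HKd := INR_div_mul_le N d).
  assert (Htrade := denominator_tradeoff c t (INR N) (INR q) (INR d) (INR (N / d)) Hc
                      ltac:(unfold t; lra) HNr Hqr Hdr HKd Hqd).
  fold A X in Htrade.
  assert (Hcount := beatty_div_count_window_sum alpha beta d N Ha Hd).
  assert (Hmain := floor_div_main_term alpha d N Ha Hd).
  specialize (Hdisc (N / d)%nat).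
  apply Rabs_le_between in Hcount. apply Rabs_le_between in Hmain.
  apply Rabs_le_between in Hdisc.
  assert (Hb := Rabs_pos beta).
  assert (H3A : 0 < 3 / A) by (apply Rdiv_lt_0_compat; lra).
  apply Rle_trans with ((Rabs beta + 3 / A + 3) * X).
  - apply Rabs_le. split; nra.
  - apply Rmult_le_compat_l; lra.
Qed.
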